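(* Let $\hat g:\mathbb C\to\mathbb C$ be the map defined in the context. Then $\hat g$ is differentiable almost everywhere and $$|\det D\hat g(z)|\ge\frac{\sin\theta_{\mathcal S}\,\min_{x\in Q}|\mathfrak h_{gen}(x)|\,\lambda\,e^{2\lambda\operatorname{Re} z}}{2L}\quad\text{for almost every }z\in\mathbb C.$$
   Context: Let $Q=[-1,1]^2$ and let $\mathfrak h_{gen}=(\mathfrak h_{gen,1},\mathfrak h_{gen,2},\mathfrak h_{gen,3}):Q\to\mathbb R^3$ be a sense-preserving $L$-bi-Lipschitz map ($|a-b|/L\le|\mathfrak h_{gen}(a)-\mathfrak h_{gen}(b)|\le L|a-b|$) onto a surface $\mathcal S=\mathfrak h_{gen}(Q)$ such that: (1) $\mathcal S\subset\{x_3\ge0\}$; (2) $\mathfrak h_{gen}(\partial Q)$ lies in the plane $x_3=0$; (3) for each $x\in Q$ the ray from $0$ through $\mathfrak h_{gen}(x)$ meets $\mathcal S$ only at $\mathfrak h_{gen}(x)$; (4) (non-tangential position vector property) there are $\theta_{\mathcal S}\in(0,\pi/2)$ and $\varepsilon>0$ such that for all distinct $w,z\in\mathcal S$ with $|w-z|\le\varepsilon$ the acute angle between the line through $0$ and $z$ and the line through $w$ and $z$ is greater than $\theta_{\mathcal S}$; (5) $\min_{x\in Q}|\mathfrak h_{gen}(x)|>0$. Assume also $\mathfrak h_{gen,1}(t,t)=\mathfrak h_{gen,2}(t,t)$, $\mathfrak h_{gen,1}(t,-t)=-\mathfrak h_{gen,2}(t,-t)$ for $t\in[-1,1]$, $\mathfrak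 h_{gen}(0,0)=(0,0,1)$ and $\sup_{x\in Q}|\mathfrak h_{gen}(x)|=1$. Let $\lambda\ge1$. Define $\hat g$ as follows: for $z=x+iy$ with $y\in[4k-1,4k+1]$, $k\in\mathbb Z$, let $\hat g(z)=e^{\lambda x}\big(\mathfrak h_{gen,3}(y-4k,y-4k)+i\,\mathfrak h_{gen,1}(y-4k,y-4k)\big)$; for $y\in[4k+1,4k+3]$ let $\hat g(z)=\hat g(\bar z+2i)$. (This is the conjugate, via $(x_1,x_1,x_3)\mapsto(x_3+ix_1)/\lambda$, of the generalized Zorich map $\mathcal Z_{gen}$ built from $h_{gen}=\lambda\mathfrak h_{gen}(\cdot/\lambda)$, restricted to the invariant plane $x_1=x_2$.) *)

From HB Require Import structures.
From mathcomp Require Import all_boot all_order all_algebra.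
From mathcomp Require Import all_classical all_reals all_analysis.
Set Implicit Arguments. Unset Strict Implicit. Unset Printing Implicit Defensive.
Import Order.TTheory GRing.Theory Num.Theory.
Import numFieldNormedType.Exports.
Local Open Scope classical_set_scope.
Local Open Scope ring_scope.

Section Defs.
Variable R : realType.

(* Points of R^2 are pairs (x1, x2); points of R^3 are triples ((x1, x2), x3). *)
Definition e1 (v : R * R * R) : R := v.1.1.
Definition e2 (v : R * R * R) : R := v.1.2.
Definition e3 (v : R * R * R) : R := v.2.

(* Euclidean norms / inner product (the library norm on products is the max norm). *)
Definition enorm2 (a : R * R) : R := Num.sqrt (a.1 ^+ 2 + a.2 ^+ 2).
Definition dot3 (u v : R * R * R) : R := e1 u * e1 v + e2 u * e2 v + e3 u * e3 v.
Definition enorm3 (v : R * R * R) : R := Num.sqrt (dot3 v v).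

Definition det3 (u v w : R * R * R) : R :=
  e1 u * (e2 v * e3 w - e3 v * e2 w)
  - e1 v * (e2 u * e3 w - e3 u * e2 w)
  + e1 w * (e2 u * e3 v - e3 u * e2 v).

Definition Qsq : set (R * R) := [set x | -1 <= x.1 <= 1 /\ -1 <= x.2 <= 1].
Definition Qbd : set (R * R) :=
  [set x | Qsq x /\ (`|x.1| = 1 \/ `|x.2| = 1)].
Definition Qint : set (R * R) := [set x | -1 < x.1 < 1 /\ -1 < x.2 < 1].

Definition leb2 := (@lebesgue_measure R \x @lebesgue_measure R)%E.

Definition biLipschitz_on_Q (L : R) (h : R * R -> R * R * R) : Prop :=
  forall a b, Qsq a -> Qsq b ->
    enorm2 (a - b) / L <= enorm3 (h a - h b) /\ enorm3 (h a - h b) <= L * enorm2 (a - b).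

(* Sense-preserving: the cone map (x, t) |-> t * h x (equivalently the
   generalized Zorich map x |-> e^{x3} h(x1,x2)) is orientation preserving,
   i.e. its Jacobian t^2 det[d1 h, d2 h, h] is >= 0 almost everywhere. *)
Definition sense_preserving (h : R * R -> R * R * R) : Prop :=
  {ae leb2, forall x, Qint x -> differentiable h x ->
     0 <= det3 ('d h x (1, 0)) ('d h x (0, 1)) (h x)}.

(* acute angle between the line through 0 and z and the line through w and z *)
Definition acute_angle (z w : R * R * R) : R :=
  acos (`|dot3 z (w - z)| / (enorm3 z * enorm3 (w - z))).

(* the curve t |-> h(t, t) on the invariant plane, in complex coordinates
   (x3 + i x1) written as pairs (Re, Im) *)
Definition gamma_diag (h : R * R -> R * R * R) (t : R) : R * R :=
  (e3 (h (t, t)), e1 (h (t, t))).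

(* ghat(x + i y): for y in [4k-1, 4k+1], e^{lam x} gamma(y - 4k);
   for y in [4k+1, 4k+3], ghat(conj z + 2i) = ghat(x + i(2 - y)),
   which equals e^{lam x} gamma(2 - y + 4k).  Here k = floor((y+1)/4). *)
Definition ghat (h : R * R -> R * R * R) (lam : R) (z : R * R) : R * R :=
  let x := z.1 in let y := z.2 in
  let k : R := (Num.floor ((y + 1) / 4))%:~R in
  let t := y - 4 * k in
  let s := if t <= 1 then t else 2 - t in
  (expR (lam * x) * (gamma_diag h s).1, expR (lam * x) * (gamma_diag h s).2).

Definition jac_det2 (f : R * R -> R * R) (z : R * R) : R :=
  ('d f z (1, 0)).1 * ('d f z (0, 1)).2 - ('d f z (0, 1)).1 * ('d f z (1, 0)).2.

End Defs.

Arguments Qsq {R}.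
Arguments Qbd {R}.
Arguments Qint {R}.

From HB Require Import structures.
From mathcomp Require Import all_boot all_order all_algebra.
From mathcomp Require Import all_classical all_reals all_analysis.
From mathcomp Require Import ring lra zify.
Set Implicit Arguments. Unset Strict Implicit. Unset Printing Implicit Defensive.
Import Order.TTheory GRing.Theory Num.Theory.
Import numFieldNormedType.Exports.
Local Open Scope classical_set_scope.
Local Open Scope ring_scope.

(* Write gamma(u) = h(sawtooth u, sawtooth u), where sawtooth is the
   4-periodic zigzag with slopes +-1 and values in [-1, 1].  Then
   ghat (x, y) = e^{lam x} (gamma_3(y), gamma_1(y)), a "separable" map, whose
   Jacobian determinant is lam e^{2 lam x} times the cross term
   gamma_3 gamma_1' - gamma_3' gamma_1 at y.  The proof has four parts:
   1. one-dimensional Rademacher theorem: a Lipschitz function on a segment is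
      differentiable a.e. (via a Lebesgue-Stieltjes measure, Radon-Nikodym and
      the fundamental theorem of calculus); since the sawtooth is an isometry
      on each segment [2k - 1, 2k + 1], gamma is differentiable a.e.;
   2. away from the odd integers the sawtooth is a local isometry, so by
      bi-Lipschitzness the chords of gamma are comparable to the increment, and
      by the non-tangential property they make an angle > theta with gamma(y);
   3. in the limit, Lagrange's identity in the plane x1 = x2 turns these chord
      estimates into |cross term| >= sin theta * hmin / L;
   4. the Jacobian of a separable map is computed, and the a.e. statements on
      the line are lifted to the plane. *)

Definition clamp {R : realType} (a b x : R) : R := Num.max a (Num.min b x).

Section Clamp.
Variables (R : realType) (a b : R).

Lemma clampE (ab : a < b) (x : R) :
  clamp a b x = if x <= a then a else if b <= x then b else x.
Proof.
rewrite /clamp maxEle minEle.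
have [bx|xb] := leP b x.
  have xa : (x <= a) = false by apply: negbTE; rewrite -ltNge (lt_le_trans ab bx).
  by rewrite xa (ltW ab).
have [xa|ax] := leP x a; last by rewrite (ltW ax).
by have [ax|//] := leP a x; apply/eqP; rewrite eq_le ax xa.
Qed.

Lemma clamp_in (ab : a < b) (x : R) : a <= clamp a b x <= b.
Proof. by rewrite clampE //; case: (leP x a) => ?; case: (leP b x) => ?; lra. Qed.

Lemma clamp_id (ab : a < b) (x : R) : a <= x <= b -> clamp a b x = x.
Proof. by rewrite clampE // => /andP[? ?]; case: (leP x a) => ?; case: (leP b x) => ?; lra. Qed.

Lemma clamp_idem (ab : a < b) (x : R) : clamp a b (clamp a b x) = clamp a b x.
Proof. by rewrite clamp_id // clamp_in. Qed.

Lemma clamp_nondecreasing (ab : a < b) : {homo clamp a b : x y / x <= y}.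
Proof.
move=> x y xy; rewrite !clampE //.
by case: (leP x a) => ?; case: (leP b x) => ?; case: (leP y a) => ?; case: (leP b y) => ?; lra.
Qed.

Lemma clamp_1lipschitz (ab : a < b) (x y : R) : `|clamp a b x - clamp a b y| <= `|x - y|.
Proof.
rewrite !clampE // ler_norml; case: (ler0P (x - y)) => ?;
by case: (leP x a) => ?; case: (leP b x) => ?; case: (leP y a) => ?; case: (leP b y) => ?; lra.
Qed.

End Clamp.

Lemma lipschitz_continuous (R : realType) (g : R -> R) (C : R) : 0 < C ->
  (forall x y, `|g x - g y| <= C * `|x - y|) -> continuous g.
Proof.
move=> C0 gC x; apply/cvgrPdist_le => e e0; near=> y.
rewrite (le_trans (gC x y)) // -ler_pdivlMl //; near: y.
have Ce : 0 < C^-1 * e by rewrite mulr_gt0 // invr_gt0.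
exact: (@cvgr_dist_le _ R^o _ (nbhs x) _ id x (@cvg_id _ (nbhs x)) _ Ce).
Unshelve. all: by end_near. Qed.

(* The function
   G = f o clamp + K clamp is nondecreasing and continuous; its
   Lebesgue-Stieltjes measure is bounded by 2K times Lebesgue measure, hence
   has a density (Radon-Nikodym), and the fundamental theorem of calculus for
   Lebesgue integrals differentiates G almost everywhere. *)
Section LipschitzAeDerivable.
Variables (R : realType) (f : R -> R) (a b K : R).
Hypotheses (ab : a < b) (K_gt0 : 0 < K)
  (f_lip : forall x y, a <= x <= b -> a <= y <= b -> `|f x - f y| <= K * `|x - y|).

(* Adding K clamp to f o clamp compensates the decrease of f: G is
   nondecreasing, 2K-Lipschitz and constant outside [a, b]. *)
Definition stieltjes_fun (x : R) : R := f (clamp a b x) + K * clamp a b x.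

Lemma stieltjes_nondecreasing : {homo stieltjes_fun : x y / x <= y}.
Proof.
move=> x y xy; rewrite /stieltjes_fun; have := K_gt0.
have := f_lip (clamp_in ab x) (clamp_in ab y).
have := clamp_nondecreasing ab xy.
move: (clamp a b x) (clamp a b y) => u v uv fuv K0.
rewrite (ler0_norm (x := u - v)) in fuv; last by lra.
by move: fuv; case: (ler0P (f u - f v)) => ?; rewrite ?ger0_norm ?ler0_norm //; nra.
Qed.

Lemma stieltjes_lipschitz (x y : R) :
  `|stieltjes_fun x - stieltjes_fun y| <= (2 * K) * `|x - y|.
Proof.
rewrite /stieltjes_fun.
have := f_lip (clamp_in ab x) (clamp_in ab y).
have := clamp_1lipschitz ab x y.
move: (clamp a b x) (clamp a b y) => u v uv fuv.
have -> : f u + K * u - (f v + K * v) = (f u - f v) + K * (u - v) by ring.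
rewrite (le_trans (ler_normD _ _)) // normrM (gtr0_norm K_gt0).
have : K * `|u - v| <= K * `|x - y| by rewrite ler_pM2l.
lra.
Qed.

Lemma stieltjes_bounded (x : R) :
  stieltjes_fun a <= stieltjes_fun x <= stieltjes_fun b.
Proof.
have -> : stieltjes_fun x = stieltjes_fun (clamp a b x) by rewrite /stieltjes_fun clamp_idem.
have /andP[ax xb] := clamp_in ab x.
by rewrite !stieltjes_nondecreasing.
Qed.

Let stieltjes_continuous : continuous stieltjes_fun.
Proof.
by apply: (@lipschitz_continuous _ _ (2 * K)); [rewrite mulr_gt0 | exact: stieltjes_lipschitz].
Qed.

HB.instance Definition _ := isCumulative.Build R _ R stieltjes_fun
  stieltjes_nondecreasing (right_continuousW stieltjes_continuous).

Definition stieltjes_measure : set (measurableTypeR R) -> \bar R :=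
  lebesgue_stieltjes_measure stieltjes_fun.
HB.instance Definition _ := Measure.on stieltjes_measure.

Lemma stieltjes_measure_itv (x y : R) : x <= y ->
  stieltjes_measure `]x, y]%classic = (stieltjes_fun y - stieltjes_fun x)%:E.
Proof.
move=> xy; rewrite /stieltjes_measure /lebesgue_stieltjes_measure /measure_extension /=.
by rewrite measurable_mu_extE /= ?wlength_itv_bnd //; exact: is_ocitv.
Qed.

(* The total mass is at most G b - G a, by continuity from below. *)
Lemma stieltjes_measure_setT :
  (stieltjes_measure setT <= (stieltjes_fun b - stieltjes_fun a)%:E)%E.
Proof.
rewrite -(bigcup_itvT false false).
pose I n : set R := `]- (n%:R), n%:R]%classic.
have cI : (stieltjes_measure \o I) n @[n --> \oo] --> stieltjes_measure (\bigcup_n I n).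
  apply: nondecreasing_cvg_mu; rewrite /I//; first exact: bigcup_measurable.
  by move=> *; apply/subsetPset/subset_itv; rewrite leBSide/= ?lerN2 ler_nat.
rewrite -(cvg_lim _ cI) //; apply: lime_le; first by apply/cvg_ex; eexists; exact: cI.
apply: nearW => n /=; rewrite /I stieltjes_measure_itv; last first.
  by rewrite (@le_trans _ _ 0) // ?oppr_le0.
by rewrite lee_fin; have := stieltjes_bounded n%:R; have := stieltjes_bounded (1 *- n); lra.
Qed.

Let stieltjes_measure_fin : fin_num_fun stieltjes_measure.
Proof.
move=> U mU; rewrite ge0_fin_numE ?measure_ge0 //.
apply: (le_lt_trans _ (le_lt_trans stieltjes_measure_setT (ltry _))).
by apply: le_measure; rewrite ?inE.
Qed.

HB.instance Definition _ :=
  @Measure_isFinite.Build _ _ _ stieltjes_measure stieltjes_measure_fin.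

(* Since G is 2K-Lipschitz, the measure it induces is at most 2K times
   Lebesgue measure: compare the outer-measure infima interval by interval. *)
Lemma stieltjes_measure_le_lebesgue (A : set (measurableTypeR R)) : measurable A ->
  (stieltjes_measure A <= (2 * K)%:E * lebesgue_measure A)%E.
Proof.
move=> mA; rewrite /stieltjes_measure /lebesgue_measure /lebesgue_stieltjes_measure.
rewrite /measure_extension /= /mu_ext -ereal_inf_pZl ?mulr_gt0 //.
apply: le_ereal_inf_tmp => _ [_ [B [mB AB] <-] <-].
apply: (@le_trans _ _ (\sum_(k <oo) wlength stieltjes_fun (B k))%E).
  by apply: ereal_inf_lbound; exists B.
rewrite -nneseriesZl; last by move=> i _; exact: wlength_ge0.
apply: lee_nneseries; first by move=> i _ _; exact: wlength_ge0.
move=> n _; have /ocitvP [->|[[x y] /= xy ->]] := mB n; first by rewrite !wlength0 mule0.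
rewrite !wlength_itv_bnd ?(ltW xy) // -EFinM lee_fin.
have := stieltjes_lipschitz y x; rewrite (gtr0_norm (x := y - x)) ?subr_gt0 //.
by move=> /(le_trans (ler_norm _)).
Qed.

Lemma stieltjes_measure_ac :
  charge_of_finite_measure stieltjes_measure `<< lebesgue_measure.
Proof.
move=> N N0 A mA AN; apply/eqP; rewrite eq_le (measure_ge0 stieltjes_measure) andbT.
by have := stieltjes_measure_le_lebesgue mA; rewrite (N0 A mA AN) mule0.
Qed.

Let density (x : R) : R :=
  fine (Radon_Nikodym (charge_of_finite_measure stieltjes_measure) lebesgue_measure x).

Let densityE :
  EFin \o density = Radon_Nikodym (charge_of_finite_measure stieltjes_measure) lebesgue_measure.
Proof.
apply/funext => x /=; rewrite /density fineK //.
exact/Radon_Nikodym_fin_num/stieltjes_measure_ac.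
Qed.

Let density_integrable : lebesgue_measure.-integrable setT (EFin \o density).
Proof. by rewrite densityE; exact/Radon_Nikodym_integrable/stieltjes_measure_ac. Qed.

Let stieltjes_measure_integral (A : set (measurableTypeR R)) : measurable A ->
  stieltjes_measure A = (\int[lebesgue_measure]_(x in A) (density x)%:E)%E.
Proof.
move=> mA; have -> : stieltjes_measure A = charge_of_finite_measure stieltjes_measure A by [].
rewrite (Radon_Nikodym_integral stieltjes_measure_ac mA).
by apply: eq_integral => x _; rewrite -densityE.
Qed.

(* G - G a is the indefinite integral of the density, hence differentiable
   almost everywhere; on ]a, b[ the function f agrees with G - K id. *)
Lemma lipschitz_ae_derivable :
  {ae lebesgue_measure, forall x, a < x < b -> derivable f x 1}.
Proof.
have int_itv y : lebesgue_measure.-integrable [set` Interval (BRight a) (BRight y)]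
    (EFin \o density) by exact: (integrableS measurableT).
have loc_int : locally_integrable [set: R] density.
  by apply: open_integrable_locally => //; exact: openT.
have := FTC1 int_itv loc_int.
apply: filterS; first exact: (ae_filter_ringOfSetsType lebesgue_measure).
move=> x Hx /andP[ax xb].
have [dF _] := Hx (ax : (BRight a < BRight x)%O).
have dG0 : derivable (fun y => stieltjes_fun y - stieltjes_fun a) x 1.
  apply: (near_eq_derivable _ dF); near=> y.
  rewrite /Rintegral -stieltjes_measure_integral // stieltjes_measure_itv //.
  by apply: ltW; near: y; exact: lt_nbhsr.
have dG : derivable stieltjes_fun x 1.
  have := derivableD dG0 (derivable_cst (stieltjes_fun a) x 1).
  by apply: near_eq_derivable; near=> y => /=; exact: subrK.
have : derivable (stieltjes_fun - K \*: id) x 1.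
  by apply: derivableB => //; apply: derivableZ; exact: derivable_id.
apply: near_eq_derivable; near=> y.
have -> : (stieltjes_fun - K \*: id) y = stieltjes_fun y - K * y by [].
rewrite /stieltjes_fun.
have -> : clamp a b y = y.
  apply: clamp_id => //; apply/andP; split; apply: ltW.
    by near: y; exact: lt_nbhsr.
  by near: y; exact: lt_nbhsl.
ring.
Unshelve. all: by end_near. Qed.

End LipschitzAeDerivable.

Lemma ae_and d (T : measurableType d) (R : realType) (mu : {measure set T -> \bar R})
    (P Q : T -> Prop) :
  {ae mu, forall x, P x} -> {ae mu, forall x, Q x} -> {ae mu, forall x, P x /\ Q x}.
Proof.
exact: (@filterS2 _ _ (ae_filter_ringOfSetsType mu) _ _ _ (fun x a b => conj a b)).
Qed.

Lemma ae_forall_countable d (T : measurableType d) (R : realType)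
    (mu : {measure set T -> \bar R}) (I : countType) (P : I -> T -> Prop) :
  (forall i, {ae mu, forall x, P i x}) -> {ae mu, forall x, forall i, P i x}.
Proof.
move=> Pae.
pose Pn n x := if unpickle n is Some i then P i x else True.
have Pn_ae n : {ae mu, forall x, Pn n x}.
  rewrite /Pn; case: (unpickle n) => [i|]; first exact: Pae.
  by apply: nearW.
have := ae_foralln Pn_ae; apply: filterS.
by move=> x Px i; have := Px (pickle i); rewrite /Pn pickleK.
Qed.

Lemma ae_not_odd_integer (R : realType) :
  {ae lebesgue_measure, forall y : R, forall k : int, y != 2 * k%:~R + 1}.
Proof.
apply: ae_forall_countable => k; exists [set 2 * k%:~R + 1]; split => //.
  exact: lebesgue_measure_set1.
by move=> y /= /negP; rewrite negbK => /eqP.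
Qed.

(* The 4-periodic sawtooth wave through the origin with slopes +-1 and values
   in [-1, 1]: the reduction of y used in the definition of ghat. *)
Definition sawtooth {R : realType} (y : R) : R :=
  let k : R := (Num.floor ((y + 1) / 4))%:~R in
  let t := y - 4 * k in if t <= 1 then t else 2 - t.

Section Sawtooth.
Variable R : realType.

Lemma sawtooth_range (y : R) : -1 <= sawtooth y <= 1.
Proof.
rewrite /sawtooth; have := floor_itv ((y + 1) / 4).
rewrite intrD; move: (Num.floor _)%:~R => k /andP[? ?].
by case: (leP (y - 4 * k) 1) => ?; lra.
Qed.

Lemma sawtooth_rising (m : int) (u : R) :
  4 * m%:~R - 1 <= u <= 4 * m%:~R + 1 -> sawtooth u = u - 4 * m%:~R.
Proof.
move=> /andP[? ?]; rewrite /sawtooth (@floor_def _ _ m); last first.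
  by rewrite intrD; apply/andP; split; lra.
by rewrite ifT //; lra.
Qed.

Lemma sawtooth_falling (m : int) (u : R) :
  4 * m%:~R + 1 <= u <= 4 * m%:~R + 3 -> sawtooth u = 4 * m%:~R + 2 - u.
Proof.
move=> /andP[? u3]; have [->|ne] := eqVneq u (4 * m%:~R + 3).
  by rewrite (@sawtooth_rising (m + 1)) intrD; [lra | apply/andP; split; lra].
have ? : u < 4 * m%:~R + 3 by rewrite lt_neqAle ne u3.
rewrite /sawtooth (@floor_def _ _ m); last by rewrite intrD; apply/andP; split; lra.
by case: leP => ?; lra.
Qed.

Lemma sawtooth_isometric_piece (k : int) (u v : R) :
  2 * k%:~R - 1 <= u <= 2 * k%:~R + 1 -> 2 * k%:~R - 1 <= v <= 2 * k%:~R + 1 ->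
  `|sawtooth u - sawtooth v| = `|u - v|.
Proof.
have [m [->|->]] : exists m : int, k = 2 * m \/ k = 2 * m + 1.
  by exists (k %/ 2)%Z; lia.
- rewrite intrM -[2%:~R]/(2 : R) => hu hv.
  rewrite !(sawtooth_rising (m := m)); [|lra|lra].
  by rewrite opprB addrA subrK.
- rewrite intrD intrM -[2%:~R]/(2 : R) => hu hv.
  rewrite !(sawtooth_falling (m := m)); [|lra|lra].
  by rewrite opprB addrC addrA subrK distrC.
Qed.

Lemma sawtooth_piece_of (y : R) : (forall k : int, y != 2 * k%:~R + 1) ->
  exists k : int, 2 * k%:~R - 1 < y < 2 * k%:~R + 1.
Proof.
move=> not_odd; exists (Num.floor ((y + 1) / 2)).
have := not_odd (Num.floor ((y + 1) / 2) - 1); have := floor_itv ((y + 1) / 2).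
rewrite !intrD; move: (Num.floor _)%:~R => k /andP[? ?] ne.
have : y != 2 * k - 1 by move: ne; rewrite mulrDr; congr (~~ (_ == _)); ring.
by rewrite neq_lt => /orP[] ?; apply/andP; split; lra.
Qed.

Lemma sawtooth_locally_isometric (y : R) : (forall k : int, y != 2 * k%:~R + 1) ->
  exists2 d, 0 < d & forall u, `|u - y| < d -> `|sawtooth u - sawtooth y| = `|u - y|.
Proof.
move=> /sawtooth_piece_of [k /andP[? ?]].
exists (Num.min (y - (2 * k%:~R - 1)) (2 * k%:~R + 1 - y)).
  by rewrite lt_min; apply/andP; split; lra.
move=> u; rewrite lt_min !ltr_norml => /andP[/andP[? ?] /andP[? ?]].
by apply: (sawtooth_isometric_piece (k := k)); apply/andP; split; lra.
Qed.

Lemma sawtooth_comp_ae_derivable (F : R -> R) (C : R) : 0 < C ->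
  (forall s s', -1 <= s <= 1 -> -1 <= s' <= 1 -> `|F s - F s'| <= C * `|s - s'|) ->
  {ae lebesgue_measure, forall y, derivable (F \o sawtooth) y 1}.
Proof.
move=> C0 F_lip.
have pieces_ae : {ae lebesgue_measure, forall y, forall k : int,
    2 * k%:~R - 1 < y < 2 * k%:~R + 1 -> derivable (F \o sawtooth) y 1}.
  apply: ae_forall_countable => k; apply: (lipschitz_ae_derivable (K := C)) => //; first lra.
  move=> u v hu hv /=; rewrite -(sawtooth_isometric_piece hu hv).
  by apply: F_lip; exact: sawtooth_range.
have := ae_and pieces_ae (ae_not_odd_integer R).
apply: filterS => y [der /sawtooth_piece_of [k yk]]; exact: der yk.
Qed.

End Sawtooth.

Section Euclid.
Variable R : realType.
Implicit Types (u v w z : R * R * R) (s t : R).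

Lemma dot3_self_ge0 v : 0 <= dot3 v v.
Proof. by rewrite /dot3 !addr_ge0 // -expr2 sqr_ge0. Qed.

Lemma enorm3_ge0 v : 0 <= enorm3 v.
Proof. exact: sqrtr_ge0. Qed.

Lemma enorm3_sqr v : enorm3 v ^+ 2 = dot3 v v.
Proof. by rewrite /enorm3 sqr_sqrtr // dot3_self_ge0. Qed.

Lemma cauchy_schwarz3 u v : `|dot3 u v| <= enorm3 u * enorm3 v.
Proof.
rewrite /enorm3 -sqrtrM ?dot3_self_ge0 // -sqrtr_sqr ler_sqrt; last first.
  by rewrite mulr_ge0 // dot3_self_ge0.
have h1 := sqr_ge0 (e1 u * e2 v - e2 u * e1 v).
have h2 := sqr_ge0 (e1 u * e3 v - e3 u * e1 v).
have h3 := sqr_ge0 (e2 u * e3 v - e3 u * e2 v).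
by rewrite /dot3; rewrite !expr2 in h1 h2 h3 *; nra.
Qed.

(* The coordinates are bounded by the Euclidean norm; applied to a
   difference v - w this says they are 1-Lipschitz. *)
Lemma e1_le_enorm3 v : `|e1 v| <= enorm3 v.
Proof.
have h2 := sqr_ge0 (e2 v); have h3 := sqr_ge0 (e3 v).
by rewrite /enorm3 /dot3 -sqrtr_sqr ler_sqrt; rewrite !expr2 in h2 h3 *; nra.
Qed.

Lemma e3_le_enorm3 v : `|e3 v| <= enorm3 v.
Proof.
have h1 := sqr_ge0 (e1 v); have h2 := sqr_ge0 (e2 v).
by rewrite /enorm3 /dot3 -sqrtr_sqr ler_sqrt; rewrite !expr2 in h1 h2 *; nra.
Qed.

Lemma enorm2_diag s t : enorm2 ((s, s) - (t, t)) = Num.sqrt 2 * `|s - t|.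
Proof.
by rewrite /enorm2 /= -sqrtr_sqr -sqrtrM ?ler0n // -real_normK ?num_real //; congr Num.sqrt; ring.
Qed.

Lemma acute_angle_dot3 z w (theta : R) :
  0 < theta < pi / 2 -> 0 < enorm3 z -> 0 < enorm3 (w - z) ->
  theta < acute_angle z w ->
  dot3 z (w - z) ^+ 2 <= cos theta ^+ 2 * (dot3 z z * dot3 (w - z) (w - z)).
Proof.
move=> /andP[th0 th1] nz nw; rewrite /acute_angle.
set D := dot3 z (w - z); set r := `|D| / (enorm3 z * enorm3 (w - z)).
have nzw : 0 < enorm3 z * enorm3 (w - z) by rewrite mulr_gt0.
have r0 : 0 <= r by rewrite divr_ge0 // ltW.
have r1 : r <= 1 by rewrite ler_pdivrMr // mul1r; exact: cauchy_schwarz3.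
have pi0 := pi_gt0 R.
have rin : r \in `[-1, 1] by rewrite in_itv /=; apply/andP; split => //; lra.
have ha : acos r \in `[0, pi] by rewrite in_itv /= acos_ge0 ?acos_lepi //; lra.
have hth : theta \in `[0, pi] by rewrite in_itv /=; apply/andP; split; lra.
move=> th_acos; have r_cos : r < cos theta by rewrite -{1}(acosK rin) ltr_cos.
have hD : `|D| < cos theta * (enorm3 z * enorm3 (w - z)) by rewrite -ltr_pdivrMr.
rewrite -!enorm3_sqr -real_normK ?num_real //.
have := normr_ge0 D; move: (enorm3 z) (enorm3 (w - z)) hD nz nw => x y hD nz nw hD0.
by rewrite !expr2; nra.
Qed.

End Euclid.

(* Lagrange's identity in the invariant plane x1 = x2:
   (2a^2 + c^2)(2q^2 + p^2) - (2aq + cp)^2 = 2 (cq - pa)^2.  Hence a lower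
   bound on |(a, a, c)|, a lower bound on |(q, q, p)| and an upper bound on
   the cosine of their angle bound the cross term cq - pa from below. *)
Lemma cross_term_lower_bound (R : realFieldType) (a c p q m2 k2 : R) :
  k2 <= 1 -> m2 <= 2 * q ^+ 2 + p ^+ 2 ->
  (2 * a * q + c * p) ^+ 2 <= k2 * ((2 * a ^+ 2 + c ^+ 2) * (2 * q ^+ 2 + p ^+ 2)) ->
  (1 - k2) * (2 * a ^+ 2 + c ^+ 2) * m2 <= 2 * (c * q - p * a) ^+ 2.
Proof.
move=> k2_le1 lower angle.
have lagrange : (2 * a ^+ 2 + c ^+ 2) * (2 * q ^+ 2 + p ^+ 2) - (2 * a * q + c * p) ^+ 2
  = 2 * (c * q - p * a) ^+ 2 by ring.
have N0 : 0 <= (1 - k2) * (2 * a ^+ 2 + c ^+ 2).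
  by apply: mulr_ge0; [lra | have := sqr_ge0 a; have := sqr_ge0 c; lra].
have := ler_wpM2l N0 lower; rewrite -lagrange; nra.
Qed.

Lemma derivable_quotient_cvg (R : realType) (f : R -> R) (y : R) :
  derivable f y 1 -> t^-1 * (f (t + y) - f y) @[t --> 0^'] --> 'D_1 f y.
Proof.
move=> df; have -> : (fun t => t^-1 * (f (t + y) - f y))
    = (fun t => t^-1 *: ((f \o shift y) (t *: 1) - f y)).
  by apply/funext => t /=; rewrite [t *: 1]mulr1.
exact: df.
Qed.

(* A curve g in the plane x1 = x2 whose chords from g y have length at
   least sqrt m2 |t| and make with g y an angle of cosine at most sqrt k2:
   passing to the limit in the chord estimates gives the same estimates for
   the tangent vector, and Lagrange's identity turns them into a lower bound
   for the cross term of g y and g'(y). *)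
Lemma curve_cross_term_bound (R : realType) (g : R -> R * R * R) (y m2 k2 : R) :
  (forall u, e1 (g u) = e2 (g u)) -> k2 <= 1 ->
  derivable (fun u => e1 (g u)) y 1 -> derivable (fun u => e3 (g u)) y 1 ->
  (\forall t \near 0^', m2 * t ^+ 2 <= dot3 (g (t + y) - g y) (g (t + y) - g y)) ->
  (\forall t \near 0^', dot3 (g y) (g (t + y) - g y) ^+ 2
     <= k2 * (dot3 (g y) (g y) * dot3 (g (t + y) - g y) (g (t + y) - g y))) ->
  (1 - k2) * dot3 (g y) (g y) * m2
    <= 2 * (e3 (g y) * 'D_1 (fun u => e1 (g u)) y
            - 'D_1 (fun u => e3 (g u)) y * e1 (g y)) ^+ 2.
Proof.
move=> g_diag k2_le1 d1 d3 chord_lower chord_angle.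
set q := 'D_1 _ y; set p := 'D_1 _ y; set a := e1 (g y); set c := e3 (g y).
pose Q1 t := t^-1 * (e3 (g (t + y)) - c); pose Q2 t := t^-1 * (e1 (g (t + y)) - a).
have cQ1 : Q1 t @[t --> 0^'] --> p := derivable_quotient_cvg d3.
have cQ2 : Q2 t @[t --> 0^'] --> q := derivable_quotient_cvg d1.
have N0E : dot3 (g y) (g y) = 2 * a ^+ 2 + c ^+ 2.
  by rewrite /dot3 -g_diag -/a -/c; ring.
(* In terms of the difference quotients, for t != 0 the chord is
   t (Q2 t, Q2 t, Q1 t). *)
have chordE s : s != 0 ->
    dot3 (g (s + y) - g y) (g (s + y) - g y) = s ^+ 2 * (2 * Q2 s ^+ 2 + Q1 s ^+ 2) /\
    dot3 (g y) (g (s + y) - g y) = s * (2 * a * Q2 s + c * Q1 s).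
  move=> s0; rewrite /dot3 /Q1 /Q2.
  rewrite -[e1 (_ - _)]/(e1 _ - e1 _) -[e2 (_ - _)]/(e2 _ - e2 _) -[e3 (_ - _)]/(e3 _ - e3 _).
  by rewrite -!g_diag -/a -/c; split; field.
have M_lower : \forall t \near 0^', m2 <= 2 * Q2 t ^+ 2 + Q1 t ^+ 2.
  near=> t; have t0 : t != 0 by near: t; exact: nbhs_dnbhs_neq.
  have [chord_sq _] := chordE t t0.
  rewrite -(@ler_pM2r _ (t ^+ 2)) ?exprn_even_gt0 // [X in _ <= X]mulrC -chord_sq.
  by near: t.
have D_upper : \forall t \near 0^', (2 * a * Q2 t + c * Q1 t) ^+ 2
    <= k2 * ((2 * a ^+ 2 + c ^+ 2) * (2 * Q2 t ^+ 2 + Q1 t ^+ 2)).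
  near=> t; have t0 : t != 0 by near: t; exact: nbhs_dnbhs_neq.
  have [chord_sq chord_dot] := chordE t t0.
  have t2 : 0 < t ^+ 2 by rewrite exprn_even_gt0.
  rewrite -(@ler_pM2r _ (t ^+ 2)) //.
  have : dot3 (g y) (g (t + y) - g y) ^+ 2
     <= k2 * (dot3 (g y) (g y) * dot3 (g (t + y) - g y) (g (t + y) - g y)) by near: t.
  by rewrite chord_sq chord_dot N0E; congr (_ <= _); ring.
have cvg_sqr (f : R -> R) (l : R) : f t @[t --> 0^'] --> l -> f t ^+ 2 @[t --> 0^'] --> l ^+ 2.
  by move=> f_l; exact: (cvgM f_l f_l).
have cM : 2 * Q2 t ^+ 2 + Q1 t ^+ 2 @[t --> 0^'] --> 2 * q ^+ 2 + p ^+ 2.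
  by apply: cvgD; [apply: cvgM; [exact: cvg_cst | exact: cvg_sqr] | exact: cvg_sqr].
rewrite N0E; apply: cross_term_lower_bound => //; first exact: (cvgr_to_ge cM M_lower).
apply: (ler_cvg_to _ _ D_upper).
  by apply: cvg_sqr; apply: cvgD; apply: cvgM => //; exact: cvg_cst.
by apply: cvgM; [exact: cvg_cst | apply: cvgM => //; exact: cvg_cst].
Unshelve. all: by end_near. Qed.

Definition separable_map {R : realType} (phi psi1 psi2 : R -> R) (z : R * R) : R * R :=
  (phi z.1 * psi1 z.2, phi z.1 * psi2 z.2).

Lemma differentiable_fst (R : realType) (z : R * R) : differentiable (@fst R R) z.
Proof.
have lin : linear (@fst R R) by [].
pose fL : {linear (R * R)%type -> R} := HB.pack (@fst R R) (GRing.isLinear.Build _ _ _ _ _ lin).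
by apply: (@linear_differentiable _ _ _ fL) => x; exact: cvg_fst.
Qed.

Lemma differentiable_snd (R : realType) (z : R * R) : differentiable (@snd R R) z.
Proof.
have lin : linear (@snd R R) by [].
pose fL : {linear (R * R)%type -> R} := HB.pack (@snd R R) (GRing.isLinear.Build _ _ _ _ _ lin).
by apply: (@linear_differentiable _ _ _ fL) => x; exact: cvg_snd.
Qed.

Section SeparableMap.
Variables (R : realType) (phi psi1 psi2 : R -> R) (z : R * R).
Hypotheses (dphi : derivable phi z.1 1)
  (dpsi1 : derivable psi1 z.2 1) (dpsi2 : derivable psi2 z.2 1).

Lemma separable_differentiable : differentiable (separable_map phi psi1 psi2) z.
Proof.
have d_in_x (f : R -> R) : derivable f z.1 1 -> differentiable (fun w : R * R => f w.1) z.
  by move=> /derivable1_diffP df; exact: (differentiable_comp (differentiable_fst z) df).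
have d_in_y (f : R -> R) : derivable f z.2 1 -> differentiable (fun w : R * R => f w.2) z.
  by move=> /derivable1_diffP df; exact: (differentiable_comp (differentiable_snd z) df).
by apply: differentiable_pair; apply: differentiableM; [exact: d_in_x | exact: d_in_y
  | exact: d_in_x | exact: d_in_y].
Qed.

Lemma separable_d10 : 'd (separable_map phi psi1 psi2) z (1, 0)
  = ('D_1 phi z.1 * psi1 z.2, 'D_1 phi z.1 * psi2 z.2).
Proof.
rewrite -deriveE; last exact: separable_differentiable.
apply: cvg_lim; first exact: norm_hausdorff.
set Qphi := fun t : R => t^-1 *: ((phi \o shift z.1) (t *: 1) - phi z.1).
have -> : (fun t : R => t^-1 *: ((separable_map phi psi1 psi2 \o shift z) (t *: (1, 0))
                                  - separable_map phi psi1 psi2 z))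
    = (fun t => (Qphi t * psi1 z.2, Qphi t * psi2 z.2)).
  apply/funext => t; rewrite /separable_map /Qphi /= scaler0 add0r.
  by apply/pair_equal_spec; split => /=; rewrite -mulrBl scalerAl.
exact: cvg_pair (cvgM dphi (cvg_cst _)) (cvgM dphi (cvg_cst _)).
Qed.

Lemma separable_d01 : 'd (separable_map phi psi1 psi2) z (0, 1)
  = (phi z.1 * 'D_1 psi1 z.2, phi z.1 * 'D_1 psi2 z.2).
Proof.
rewrite -deriveE; last exact: separable_differentiable.
apply: cvg_lim; first exact: norm_hausdorff.
have -> : (fun t : R => t^-1 *: ((separable_map phi psi1 psi2 \o shift z) (t *: (0, 1))
                                  - separable_map phi psi1 psi2 z))
    = (fun t => (phi z.1 * (t^-1 *: ((psi1 \o shift z.2) (t *: 1) - psi1 z.2)),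
                 phi z.1 * (t^-1 *: ((psi2 \o shift z.2) (t *: 1) - psi2 z.2)))).
  apply/funext => t; rewrite /separable_map /= scaler0 add0r.
  by apply/pair_equal_spec; split => /=; rewrite -mulrBr scalerAr.
exact: cvg_pair (cvgM (cvg_cst _) dpsi1) (cvgM (cvg_cst _) dpsi2).
Qed.

Lemma separable_jac_det2 : jac_det2 (separable_map phi psi1 psi2) z
  = phi z.1 * 'D_1 phi z.1 * (psi1 z.2 * 'D_1 psi2 z.2 - 'D_1 psi1 z.2 * psi2 z.2).
Proof. by rewrite /jac_det2 separable_d10 separable_d01 /=; ring. Qed.

End SeparableMap.

Definition sawtooth_curve {R : realType} (h : R * R -> R * R * R) (u : R) : R * R * R :=
  h (sawtooth u, sawtooth u).

Lemma ghat_separable (R : realType) (h : R * R -> R * R * R) (lam : R) :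
  ghat h lam = separable_map (fun x => expR (lam * x))
    (fun y => e3 (sawtooth_curve h y)) (fun y => e1 (sawtooth_curve h y)).
Proof. by []. Qed.

Lemma Qsq_diag (R : realType) (s : R) : -1 <= s <= 1 -> Qsq (s, s).
Proof. by split. Qed.

Section SawtoothCurve.
Variables (R : realType) (h : R * R -> R * R * R) (L : R).
Hypotheses (L_gt0 : 0 < L) (h_bilip : biLipschitz_on_Q L h).

Lemma sawtooth_curve_ae_derivable (e : R * R * R -> R) :
  (forall v w, `|e v - e w| <= enorm3 (v - w)) ->
  {ae lebesgue_measure, forall y, derivable (fun u => e (sawtooth_curve h u)) y 1}.
Proof.
move=> e_lip; apply: (@sawtooth_comp_ae_derivable _ (fun s => e (h (s, s))) (L * Num.sqrt 2)).
  by rewrite mulr_gt0 ?sqrtr_gt0.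
move=> s s' hs hs'; rewrite -mulrA -enorm2_diag.
exact: le_trans (e_lip _ _) (h_bilip (Qsq_diag hs) (Qsq_diag hs')).2.
Qed.

Section AtIsometricPoint.
(* A point y near which the sawtooth is an isometry, so that chords of the
   curve are comparable to the increment t. *)
Variables (y d : R).
Hypotheses (d_gt0 : 0 < d)
  (saw_iso : forall u, `|u - y| < d -> `|sawtooth u - sawtooth y| = `|u - y|).

Let chord t := sawtooth_curve h (t + y) - sawtooth_curve h y.

Lemma sawtooth_curve_chord t : `|t| < d ->
  Num.sqrt 2 * `|t| / L <= enorm3 (chord t) <= L * (Num.sqrt 2 * `|t|).
Proof.
move=> td; have := saw_iso (u := t + y); rewrite addrK => /(_ td) iso.
have [lower upper] := h_bilip (Qsq_diag (sawtooth_range (t + y))) (Qsq_diag (sawtooth_range y)).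
by rewrite enorm2_diag iso in lower upper; rewrite lower upper.
Qed.

Lemma sawtooth_curve_chord_lower :
  \forall t \near 0^', 2 / L ^+ 2 * t ^+ 2 <= dot3 (chord t) (chord t).
Proof.
near=> t.
have td : `|t| < d by near: t; exact: dnbhs0_lt.
have /andP[lower _] := sawtooth_curve_chord td.
have bound_ge0 : 0 <= Num.sqrt 2 * `|t| / L by rewrite divr_ge0 ?mulr_ge0 ?sqrtr_ge0 // ltW.
rewrite -enorm3_sqr (le_trans _ (_ : (Num.sqrt 2 * `|t| / L) ^+ 2 <= _)); last first.
  by rewrite ler_sqr ?nnegrE // (le_trans bound_ge0).
rewrite expr_div_n exprMn sqr_sqrtr // real_normK ?num_real //.
by rewrite le_eqVlt; apply/orP; left; apply/eqP; field; rewrite gt_eqF.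
Unshelve. all: by end_near. Qed.

Lemma sawtooth_curve_chord_angle (theta eps : R) :
  0 < theta < pi / 2 -> 0 < eps ->
  (forall w z, (h @` Qsq) w -> (h @` Qsq) z -> w != z ->
      enorm3 (w - z) <= eps -> theta < acute_angle z w) ->
  0 < enorm3 (sawtooth_curve h y) ->
  \forall t \near 0^', dot3 (sawtooth_curve h y) (chord t) ^+ 2
    <= cos theta ^+ 2 * (dot3 (sawtooth_curve h y) (sawtooth_curve h y)
                         * dot3 (chord t) (chord t)).
Proof.
move=> theta_bnd eps_gt0 nontangential gy_gt0.
have sqrt2_gt0 : 0 < Num.sqrt 2 :> R by rewrite sqrtr_gt0.
have Ls2_gt0 : 0 < L * Num.sqrt 2 by rewrite mulr_gt0.
near=> t.
have t0 : t != 0 by near: t; exact: nbhs_dnbhs_neq.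
have td : `|t| < d by near: t; exact: dnbhs0_lt.
have teps : `|t| <= eps / (L * Num.sqrt 2) by near: t; apply: dnbhs0_le; rewrite divr_gt0.
have /andP[lower upper] := sawtooth_curve_chord td.
have chord_gt0 : 0 < enorm3 (chord t).
  by apply: lt_le_trans lower; rewrite divr_gt0 // mulr_gt0 // normr_gt0.
apply: acute_angle_dot3 => //; apply: nontangential.
- by exists (sawtooth (t + y), sawtooth (t + y)) => //; exact/Qsq_diag/sawtooth_range.
- by exists (sawtooth y, sawtooth y) => //; exact/Qsq_diag/sawtooth_range.
- apply: contraTneq chord_gt0 => same; rewrite /chord same subrr.
  by rewrite /enorm3 /dot3 /= !mulr0 !addr0 sqrtr0 ltxx.
- by rewrite (le_trans upper) // mulrA -ler_pdivlMl // mulrC.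
Unshelve. all: by end_near. Qed.

(* The cross term of the curve and its tangent vector at y, which is the
   Jacobian of ghat up to the factor lam e^{2 lam x}, is bounded below. *)
Lemma sawtooth_curve_cross_term (theta eps hmin : R) :
  0 < theta < pi / 2 -> 0 < eps ->
  (forall w z, (h @` Qsq) w -> (h @` Qsq) z -> w != z ->
      enorm3 (w - z) <= eps -> theta < acute_angle z w) ->
  0 < hmin -> hmin <= enorm3 (sawtooth_curve h y) ->
  (forall s, -1 <= s <= 1 -> e1 (h (s, s)) = e2 (h (s, s))) ->
  derivable (fun u => e1 (sawtooth_curve h u)) y 1 ->
  derivable (fun u => e3 (sawtooth_curve h u)) y 1 ->
  sin theta * hmin / L
    <= `|e3 (sawtooth_curve h y) * 'D_1 (fun u => e1 (sawtooth_curve h u)) y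
         - 'D_1 (fun u => e3 (sawtooth_curve h u)) y * e1 (sawtooth_curve h y)|.
Proof.
move=> theta_bnd eps_gt0 nontangential hmin_gt0 hmin_le diag d1 d3.
have sin_gt0 : 0 < sin theta.
  have := pi_gt0 R; case/andP: (theta_bnd) => th0 th1 pi0.
  by apply: sin_gt0_pi; apply/andP; split; lra.
have lhs_ge0 : 0 <= sin theta * hmin / L by rewrite divr_ge0 ?mulr_ge0 // ltW.
have gy_sqr : hmin ^+ 2 <= dot3 (sawtooth_curve h y) (sawtooth_curve h y).
  by rewrite -enorm3_sqr ler_sqr ?nnegrE ?enorm3_ge0 ?(ltW hmin_gt0).
have cos2_le1 : cos theta ^+ 2 <= 1 by rewrite cos2sin2 lerBlDr lerDl sqr_ge0.
have := curve_cross_term_bound (fun u => diag _ (sawtooth_range u)) cos2_le1 d1 d3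
  sawtooth_curve_chord_lower
  (sawtooth_curve_chord_angle theta_bnd eps_gt0 nontangential (lt_le_trans hmin_gt0 hmin_le)).
rewrite -sin2cos2 => bound.
rewrite -ler_sqr ?nnegrE // real_normK ?num_real //.
apply: le_trans (_ : sin theta ^+ 2 * hmin ^+ 2 * (2 / L ^+ 2) / 2 <= _).
  by rewrite le_eqVlt; apply/orP; left; apply/eqP; field; rewrite gt_eqF.
rewrite ler_pdivrMr // [leRHS]mulrC; apply: le_trans bound.
apply: ler_wpM2r; first by rewrite divr_ge0 // exprn_ge0 // ltW.
by apply: ler_wpM2l; rewrite ?sqr_ge0.
Qed.

End AtIsometricPoint.
End SawtoothCurve.

Lemma ae_snd (R : realType) (P : R -> Prop) :
  {ae lebesgue_measure, forall y, P y} -> {ae @leb2 R, forall z, P z.2}.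
Proof.
move=> [N [mN N0 NP]]; exists (setT `*` N); split.
- exact: measurableX.
- rewrite /leb2 product_measure1E // -[RHS](mule0 (lebesgue_measure [set: R])).
  by congr (_ * _)%E; exact: N0.
- by move=> z /= nP; split => //; exact: NP.
Qed.

Lemma is_derive_expR_lin (R : realType) (lam x : R) :
  is_derive x 1 (fun y : R => expR (lam * y)) (expR (lam * x) * lam).
Proof.
have := @is_deriveZ R R R id lam x 1 1 (is_derive_id x 1).
rewrite [lam *: _]mulr1 => dlin.
exact: (is_derive1_comp (f := expR) (g := fun y => lam * y)).
Qed.

(* At almost every z = (x, y) the sawtooth is a local isometry at y and both
   coordinates of the curve are differentiable at y; there ghat, a separable
   map, is differentiable with Jacobian lam e^{2 lam x} times the cross term,
   which is at least sin theta * hmin / L. *)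
Theorem lemma7p1 (R : realType) (h : R * R -> R * R * R) (L theta eps hmin lam : R) :
  0 < L ->
  biLipschitz_on_Q L h ->
  sense_preserving h ->
  (forall x, Qsq x -> 0 <= e3 (h x)) ->
  (forall x, Qbd x -> e3 (h x) = 0) ->
  (forall x x', Qsq x -> Qsq x' -> forall s : R, 0 <= s ->
      h x' = s *: h x -> h x' = h x) ->
  0 < theta < pi / 2 -> 0 < eps ->
  (forall w z, (h @` Qsq) w -> (h @` Qsq) z -> w != z ->
      enorm3 (w - z) <= eps -> theta < acute_angle z w) ->
  (exists2 x0, Qsq x0 & enorm3 (h x0) = hmin) ->
  (forall x, Qsq x -> hmin <= enorm3 (h x)) ->
  0 < hmin ->
  (forall t, -1 <= t <= 1 -> e1 (h (t, t)) = e2 (h (t, t))) ->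
  (forall t, -1 <= t <= 1 -> e1 (h (t, - t)) = - e2 (h (t, - t))) ->
  h (0, 0) = (0, 0, 1) ->
  sup [set enorm3 (h x) | x in Qsq] = 1 ->
  1 <= lam ->
  {ae @leb2 R, forall z, differentiable (ghat h lam) z} /\
  {ae @leb2 R, forall z,
     sin theta * hmin * lam * expR (2 * lam * z.1) / (2 * L)
       <= `|jac_det2 (ghat h lam) z|}.
Proof.
move=> L_gt0 h_bilip _ _ _ _ theta_bnd eps_gt0 nontangential _ hmin_le hmin_gt0 diag _ _ _ lam_ge1.
have good := ae_snd (ae_and (ae_and
  (sawtooth_curve_ae_derivable L_gt0 h_bilip (fun v w => e1_le_enorm3 (v - w)))
  (sawtooth_curve_ae_derivable L_gt0 h_bilip (fun v w => e3_le_enorm3 (v - w))))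
  (ae_not_odd_integer R)).
have leb2_ae_filter : Filter (nbhs (almost_everywhere (@leb2 R))).
  exact: (ae_filter_ringOfSetsType (@lebesgue_measure R \x @lebesgue_measure R)%E).
rewrite ghat_separable; split; apply: filterS good => z [[d1 d3] not_odd];
  have [dexp Dexp] := is_derive_expR_lin lam z.1.
  exact: separable_differentiable.
have [d d_gt0 saw_iso] := sawtooth_locally_isometric not_odd.
have := sawtooth_curve_cross_term L_gt0 h_bilip d_gt0 saw_iso theta_bnd eps_gt0
  nontangential hmin_gt0 (hmin_le _ (Qsq_diag (sawtooth_range _))) diag d1 d3.
rewrite separable_jac_det2 // Dexp.
set E := expR (lam * z.1) => cross.
have E_gt0 : 0 < E by exact: expR_gt0.
have -> : expR (2 * lam * z.1) = E * E by rewrite -expRD; congr expR; ring.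
rewrite normrM gtr0_norm ?mulr_gt0 //; last lra.
have c_gt0 : 0 < E * (E * lam) by rewrite !mulr_gt0 //; lra.
have -> : sin theta * hmin * lam * (E * E) / (2 * L)
    = E * (E * lam) * (sin theta * hmin / L) / 2 by field; rewrite gt_eqF.
have halve (a x : R) : a <= x -> 0 <= x -> E * (E * lam) * a / 2 <= E * (E * lam) * x.
  move=> ax x0; have := ler_wpM2l (ltW c_gt0) ax; have := mulr_ge0 (ltW c_gt0) x0; lra.
exact: halve cross (normr_ge0 _).
Qed.
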